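(* Let $\Pi = (\mathcal{A}, \mathcal{E}, \mathcal{R})$ be an epistemic logic program and let $\Pi' = (\mathcal{A}', \mathcal{E}', \mathcal{R})$ be an epistemic logic program with the same set of rules $\mathcal{R}$, but with $\mathcal{A}' \supset \mathcal{A}$ and $\mathcal{E}' \supset \mathcal{E}$. Then the sets of candidate world views of $\Pi$ and $\Pi'$ coincide: $\mathrm{CWV}(\Pi) = \mathrm{CWV}(\Pi')$.
   Context: A literal over a set of propositional atoms $\mathcal{A}$ is an atom $a$ or its default negation $\neg a$. An interpretation is a set $I\subseteq\mathcal{A}$; $I\models a$ iff $a\in I$, $I\models \neg \ell$ iff $I\not\models \ell$ (so doubly negated atoms are allowed), extended to sets of literals conjunctively. A (plain) logic program is a pair $(\mathcal{A},\mathcal{R})$ of atoms and rules $a_1\vee\cdots\vee a_l \leftarrow a_{l+1},\ldots,a_m,\neg\ell_1,\ldots,\neg\ell_n$ ($a_i$ atoms, $\ell_i$ literals); for a rule $r$, $H(r)$ is the head set, $B(r)$ the body and $B^+(r)=\{a_{l+1},\ldots,a_m\}$. $M\models r$ iff $M\models B(r)$ implies $M\models$ some atom of $H(r)$; models of a program are interpretations satisfying all rules. The GL-reduct of $\Pi=(\mathcal{A},\mathcal{R})$ w.r.t. $I$ is $(\mathcal{A},\{H(r)\leftarrow B^+(r)\mid r\in\mathcal{R},\ I\models\neg\ell \text{ for all } \neg\ell\in B(r)\})$. $M$ is an answer set of $\Pi$ iff $M$ is a model of $\Pi$ and no $M'\subset M$ is a model of the GL-reduct $\Pi^M$; $AS(\Pi)$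 is the set of answer sets (triple negations $\neg\neg\neg a$ are treated as $\neg a$). An epistemic literal is $\mathbf{not}\,\ell$ for a literal $\ell$. An epistemic logic program (ELP) is a triple $(\mathcal{A},\mathcal{E},\mathcal{R})$ with $\mathcal{E}$ a set of epistemic literals over $\mathcal{A}$ and $\mathcal{R}$ a set of rules $a_1\vee\cdots\vee a_k\leftarrow \ell_1,\ldots,\ell_m,\xi_1,\ldots,\xi_j,\neg\xi_{j+1},\ldots,\neg\xi_n$ with $a_i\in\mathcal{A}$, $\ell_i$ literals, $\xi_i\in\mathcal{E}$. A guess is a subset $\Phi\subseteq\mathcal{E}$. A set $\mathcal{I}$ of interpretations is $\Phi$-compatible w.r.t. $\mathcal{E}$ iff (1) $\mathcal{I}\neq\emptyset$, (2) for each $\mathbf{not}\,\ell\in\Phi$ some $I\in\mathcal{I}$ has $I\not\models\ell$, and (3) for each $\mathbf{not}\,\ell\in\mathcal{E}\setminus\Phi$ all $I\in\mathcal{I}$ satisfy $I\models\ell$. The epistemic reduct $\Pi^\Phi$ is the logic program $(\mathcal{A},\mathcal{R}^\Phi)$ obtained by replacing in every rule each occurrence of $\mathbf{not}\,\ell\in\Phi$ by $\top$ and every remaining $\mathbf{not}$ by $\neg$. A set $\mathcal{M}$ of interpretations is a candidate world view (CWV) of $\Pi$ iff there is a guess $\Phi\subseteq\mathcal{E}$ with $\mathcal{M}=AS(\Pi^\Phi)$ and $\mathcal{M}$ $\Phi$-compatible w.r.t. $\mathcal{E}$; $\mathrm{CWV}(\Pi)$ denotes the set of CWVs. *)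

From Stdlib Require Import List.
Import ListNotations.
Set Implicit Arguments.

Section ELP.
Variable Atom : Type.

Inductive lit : Type := LPos (a : Atom) | LNeg (a : Atom).

Definition lit_atom (l : lit) : Atom := match l with LPos a => a | LNeg a => a end.

Definition lsat (I : Atom -> Prop) (l : lit) : Prop :=
  match l with LPos a => I a | LNeg a => ~ I a end.

(* Body elements of a plain rule: a positive atom a, a negated literal ~l
   (i.e. ~a or ~~a), and the constants T and ~T produced by the epistemic
   reduct. *)
Inductive bitem : Type :=
  | BAtom (a : Atom)
  | BNeg (l : lit)
  | BTop
  | BNegTop.

Definition bsat (I : Atom -> Prop) (b : bitem) : Prop :=
  match b with
  | BAtom a => I a
  | BNeg l => ~ lsat I l
  | BTop => True
  | BNegTop => False
  end.

Record prule : Type := PRule { phead : list Atom; pbody : list bitem }.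

Definition rsat (M : Atom -> Prop) (r : prule) : Prop :=
  (forall b, In b (pbody r) -> bsat M b) -> exists a, In a (phead r) /\ M a.

Definition interp (A : Atom -> Prop) (I : Atom -> Prop) : Prop :=
  forall a, I a -> A a.

Definition is_model (A : Atom -> Prop) (R : prule -> Prop) (M : Atom -> Prop) : Prop :=
  interp A M /\ forall r, R r -> rsat M r.

Definition neg_item (b : bitem) : Prop :=
  match b with BNeg _ | BNegTop => True | _ => False end.

Fixpoint bplus (bs : list bitem) : list Atom :=
  match bs with
  | [] => []
  | BAtom a :: bs' => a :: bplus bs'
  | _ :: bs' => bplus bs'
  end.

Definition gl_reduct (R : prule -> Prop) (I : Atom -> Prop) : prule -> Prop :=
  fun r' => exists r, R r /\
    (forall b, In b (pbody r) -> neg_item b -> bsat I b) /\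
    r' = PRule (phead r) (map BAtom (bplus (pbody r))).

Definition strict_subset (M' M : Atom -> Prop) : Prop :=
  (forall a, M' a -> M a) /\ exists a, M a /\ ~ M' a.

Definition answer_set (A : Atom -> Prop) (R : prule -> Prop) (M : Atom -> Prop) : Prop :=
  is_model A R M /\
  ~ (exists M', strict_subset M' M /\ is_model A (gl_reduct R M) M').

(* An epistemic literal  not l  is represented by the literal l. *)
Record erule : Type := ERule {
  ehead : list Atom;
  ebody : list lit;
  epos  : list lit;
  eneg  : list lit
}.

Definition wf_elp (A : Atom -> Prop) (E : lit -> Prop) (R : erule -> Prop) : Prop :=
  (forall l, E l -> A (lit_atom l)) /\
  (forall r, R r ->
     (forall a, In a (ehead r) -> A a) /\
     (forall l, In l (ebody r) -> A (lit_atom l)) /\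
     (forall l, In l (epos r) -> E l) /\
     (forall l, In l (eneg r) -> E l)).

(* Epistemic reduct w.r.t. a guess Phi (given as a boolean predicate):
   not l in Phi  ~>  T ;  other  not l  ~>  ~ l ;
   ~ not l with l in Phi ~> ~T ; other ~ not l ~> ~~l, where ~~~a is ~a. *)
Definition tr_ord (l : lit) : bitem :=
  match l with LPos a => BAtom a | LNeg a => BNeg (LPos a) end.

Definition tr_pos (Phi : lit -> bool) (l : lit) : bitem :=
  if Phi l then BTop else BNeg l.

Definition tr_neg (Phi : lit -> bool) (l : lit) : bitem :=
  if Phi l then BNegTop
  else match l with LPos a => BNeg (LNeg a) | LNeg a => BNeg (LPos a) end.

Definition ereduct_rule (Phi : lit -> bool) (r : erule) : prule :=
  PRule (ehead r)
        (map tr_ord (ebody r) ++ map (tr_pos Phi) (epos r) ++ map (tr_neg Phi) (eneg r)).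

Definition ereduct (Phi : lit -> bool) (R : erule -> Prop) : prule -> Prop :=
  fun r' => exists r, R r /\ r' = ereduct_rule Phi r.

Definition compatible (E : lit -> Prop) (Phi : lit -> bool)
  (M : (Atom -> Prop) -> Prop) : Prop :=
  (exists I, M I) /\
  (forall l, E l -> Phi l = true -> exists I, M I /\ ~ lsat I l) /\
  (forall l, E l -> Phi l = false -> forall I, M I -> lsat I l).

Definition is_cwv (A : Atom -> Prop) (E : lit -> Prop) (R : erule -> Prop)
  (M : (Atom -> Prop) -> Prop) : Prop :=
  exists Phi : lit -> bool,
    (forall l, Phi l = true -> E l) /\
    (forall I, M I <-> answer_set A (ereduct Phi R) I) /\
    compatible E Phi M.

End ELP.

(** Answer sets do not depend on the atom universe: an answer set of a program
    whose rule heads lie in [A] is automatically contained in [A], since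
    otherwise its intersection with [A] would be a strictly smaller model of
    the GL-reduct.  A compatible guess is determined by the world view itself
    on the epistemic literals, and the epistemic reduct only reads the guess on
    the epistemic literals occurring in the rules.  Hence whether [M] is a
    candidate world view depends only on [M] and the rules. *)
From Stdlib Require Import List Classical ClassicalEpsilon FunctionalExtensionality
  PropExtensionality.
Set Implicit Arguments.

Section AnswerSets.
Variable Atom : Type.
Implicit Types (A : Atom -> Prop) (P : prule Atom -> Prop) (M I : Atom -> Prop).

Lemma in_bplus (a : Atom) (bs : list (bitem Atom)) :
  In (BAtom a) bs -> In a (bplus bs).
Proof.
induction bs as [| [] bs IH]; simpl; intros Hin; try destruct Hin as [Heq | Hin];
  try discriminate; auto.
left; congruence.
Qed.

Definition heads_in A P : Prop :=
  forall r, P r -> forall a, In a (phead r) -> A a.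

Lemma rsat_gl_reduct P M :
  (forall r, P r -> rsat M r) -> forall r, gl_reduct P M r -> rsat M r.
Proof.
intros HM r' (r & Hr & Hneg & ->) Hbody.
apply (HM r Hr); intros [a | l | | ] Hin; simpl.
- apply (Hbody (BAtom a)); simpl; apply in_map, in_bplus, Hin.
- exact (Hneg (BNeg l) Hin I).
- exact I.
- exact (Hneg (BNegTop Atom) Hin I).
Qed.

(* The bodies of the GL-reduct are positive, so shrinking a model to the
   atoms of [A] keeps every body it satisfies satisfied in [M]. *)
Lemma rsat_gl_reduct_restrict A P I M :
  heads_in A P ->
  (forall r, gl_reduct P I r -> rsat M r) ->
  forall r, gl_reduct P I r -> rsat (fun a => M a /\ A a) r.
Proof.
intros HA HM r' Hr' Hbody.
destruct (HM r' Hr') as (a & Hin & HMa).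
- intros b Hb; specialize (Hbody b Hb).
  destruct Hr' as (r & _ & _ & ->); simpl in Hb.
  apply in_map_iff in Hb as (x & <- & _); exact (proj1 Hbody).
- exists a; split; [exact Hin|split; [exact HMa|]].
  destruct Hr' as (r & Hr & _ & ->); exact (HA r Hr a Hin).
Qed.

Lemma answer_setT A P M :
  answer_set A P M <-> interp A M /\ answer_set (fun _ => True) P M.
Proof.
split.
- intros [[HAM HM] Hmin]; split; [exact HAM|split; [split; [now intros|exact HM]|]].
  intros (M' & HM'M & _ & HM'); apply Hmin; exists M'.
  split; [exact HM'M|split; [|exact HM']].
  intros a Ha; apply HAM, (proj1 HM'M), Ha.
- intros (HAM & [[_ HM] Hmin]); split; [split; [exact HAM|exact HM]|].
  intros (M' & HM'M & _ & HM'); apply Hmin; exists M'.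
  split; [exact HM'M|split; [now intros|exact HM']].
Qed.

Lemma answer_set_interp A P M :
  heads_in A P -> answer_set (fun _ => True) P M -> interp A M.
Proof.
intros HA [[_ HM] Hmin] a Ha; apply NNPP; intros HnA.
apply Hmin; exists (fun a => M a /\ A a); split.
- split; [tauto|]; exists a; tauto.
- split; [now intros|].
  exact (rsat_gl_reduct_restrict HA (rsat_gl_reduct HM)).
Qed.

Lemma answer_set_universe A P M :
  heads_in A P -> answer_set A P M <-> answer_set (fun _ => True) P M.
Proof.
intros HA; rewrite answer_setT; split; [tauto|].
intros HM; split; [exact (answer_set_interp HA HM)|exact HM].
Qed.

End AnswerSets.

Section WorldViews.
Variable Atom : Type.
Implicit Types (A : Atom -> Prop) (E : lit Atom -> Prop) (R : erule Atom -> Prop)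
  (Phi : lit Atom -> bool) (M : (Atom -> Prop) -> Prop).

Lemma ereduct_heads_in A R Phi :
  (forall r, R r -> forall a, In a (ehead r) -> A a) -> heads_in A (ereduct Phi R).
Proof. intros HA r' (r & Hr & ->); exact (HA r Hr). Qed.

Lemma ereduct_ext R Phi Phi' :
  (forall r, R r -> forall l, In l (epos r) \/ In l (eneg r) -> Phi l = Phi' l) ->
  ereduct Phi R = ereduct Phi' R.
Proof.
intros Heq; apply functional_extensionality; intros r'.
assert (Hrule : forall r, R r -> ereduct_rule Phi r = ereduct_rule Phi' r).
{ intros r Hr; unfold ereduct_rule, tr_pos, tr_neg.
  do 3 f_equal; apply map_ext_in; intros l Hl; rewrite (Heq r Hr l); auto. }
apply propositional_extensionality.
split; intros (r & Hr & ->); exists r; rewrite (Hrule r Hr); auto.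
Qed.

Definition canonical_guess E M (l : lit Atom) : bool :=
  if excluded_middle_informative (E l /\ exists I, M I /\ ~ lsat I l)
  then true else false.

Lemma canonical_guess_sub E M l : canonical_guess E M l = true -> E l.
Proof. unfold canonical_guess; destruct excluded_middle_informative; easy. Qed.

Lemma canonical_guessE E M l :
  E l -> canonical_guess E M l = true <-> exists I, M I /\ ~ lsat I l.
Proof.
intros Hl; unfold canonical_guess.
destruct excluded_middle_informative; split; intros H; try tauto; discriminate.
Qed.

Lemma compatible_canonical_guess E M :
  (exists I, M I) -> compatible E (canonical_guess E M) M.
Proof.
intros HM; split; [exact HM|split].
- intros l Hl; apply canonical_guessE, Hl.
- intros l Hl Hfalse I HI; apply NNPP; intros Hn.
  enough (canonical_guess E M l = true) by congruence.
  apply canonical_guessE; eauto.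
Qed.

Lemma compatible_guess_unique E Phi M l :
  compatible E Phi M -> E l -> Phi l = canonical_guess E M l.
Proof.
intros (_ & Htrue & Hfalse) Hl.
destruct (Phi l) eqn:HPhi; symmetry.
- apply canonical_guessE; auto.
- destruct (canonical_guess E M l) eqn:Hc; [|reflexivity].
  apply canonical_guessE in Hc as (I & HI & Hn); [|exact Hl].
  contradiction (Hfalse l Hl HPhi I HI).
Qed.

Lemma is_cwv_iff A E R M :
  wf_elp A E R ->
  is_cwv A E R M <->
  (exists I, M I) /\
  forall I, M I <-> answer_set (fun _ => True) (ereduct (canonical_guess E M) R) I.
Proof.
intros [_ HR].
assert (HA : forall Phi, heads_in A (ereduct Phi R)).
{ intros Phi; apply ereduct_heads_in; intros r Hr; apply (HR r Hr). }
split.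
- intros (Phi & _ & HM & Hcomp); split; [exact (proj1 Hcomp)|intros I].
  assert (Hred : ereduct Phi R = ereduct (canonical_guess E M) R).
  { apply ereduct_ext; intros r Hr l Hl.
    destruct (HR r Hr) as (_ & _ & Hpos & Hneg).
    apply (compatible_guess_unique l Hcomp); destruct Hl; auto. }
  rewrite HM, <- Hred; apply answer_set_universe, HA.
- intros [Hne HM]; exists (canonical_guess E M); split; [|split].
  + apply canonical_guess_sub.
  + intros I; rewrite HM; symmetry; apply answer_set_universe, HA.
  + apply compatible_canonical_guess, Hne.
Qed.

End WorldViews.

Theorem theorem1 (Atom : Type) (A A' : Atom -> Prop) (E E' : lit Atom -> Prop)
  (R : erule Atom -> Prop) :
  wf_elp A E R ->
  wf_elp A' E' R ->
  (forall a, A a -> A' a) ->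
  (forall l, E l -> E' l) ->
  forall M : (Atom -> Prop) -> Prop,
    is_cwv A E R M <-> is_cwv A' E' R M.
Proof.
intros HW HW' _ _ M.
rewrite (is_cwv_iff M HW), (is_cwv_iff M HW').
enough (Hred : ereduct (canonical_guess E M) R = ereduct (canonical_guess E' M) R)
  by (rewrite Hred; reflexivity).
apply ereduct_ext; intros r Hr l Hl.
destruct (proj2 HW r Hr) as (_ & _ & Hpos & Hneg).
destruct (proj2 HW' r Hr) as (_ & _ & Hpos' & Hneg').
assert (HEl : E l /\ E' l) by (destruct Hl; auto).
unfold canonical_guess.
do 2 destruct excluded_middle_informative; tauto.
Qed.
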